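(* Let $\mathcal R$ be a reaction network and $x,x'\in\mathbb{N}_0^n$. Then $x$ leads to $x'$ via $\mathcal R$ if and only if there is $(y,y')\in\mathrm{cl}(\mathcal R)$ with $x\ge y$ and $x'=x+y'-y$; equivalently, if and only if there is $(y,y')\in\mathrm{cl}(\mathcal R)$ with $(x,x')\ge(y,y')$ and $(x,x')\sim(y,y')$.
   Context: A reaction network (RN) is a (possibly infinite) subset $\mathcal R\subseteq\mathbb{N}_0^n\times\mathbb{N}_0^n$ containing no element $(y,y')$ with $y=y'$; elements $(y,y')$ are reactions $y\to y'$. Order on $\mathbb{Z}^n$ and on $\mathbb{N}_0^n\times\mathbb{N}_0^n$ is componentwise. For $r_1=(y_1,y_1'),\ r_2=(y_2,y_2')$ define $r_1\oplus r_2=(y_1+0\vee(y_2-y_1'),\ y_2'+0\vee(y_1'-y_2))$ ($\vee$ componentwise maximum); it is associative. For $A\subseteq\mathbb{N}_0^n\times\mathbb{N}_0^n$, $\mathrm{cl}(A)$ is the set of all finite $\oplus$-sums of elements of $A$ (repetitions allowed), including the empty sum $(0,0)$. $(y_1,y_1')\sim(y_2,y_2')$ means $y_1'-y_1=y_2'-y_2$. An ordered sequence of reactions $y_1\to y_1',\dots,y_m\to y_m'$ is active on $x\in\mathbb{N}_0^n$ if $x+\sum_{i=1}^{k-1}(y_i'-y_i)\ge y_k$ for all $k=1,\dots,m$. A state $x$ leads to $x'$ via $\mathcal R$ if there is an ordered sequence of $m\ge0$ reactions of $\mathcal R$ (repetitions allowed) active on $x$ with $x'=x+\sum_{i=1}^m(y_i'-y_i)$.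 *)

From mathcomp Require Import all_boot all_order all_algebra.
Set Implicit Arguments. Unset Strict Implicit. Unset Printing Implicit Defensive.
Import GRing.Theory Num.Theory.

Definition vec (n : nat) := {ffun 'I_n -> nat}.
(* A reaction (y, y') : y -> y' *)
Definition reaction (n : nat) := (vec n * vec n)%type.

Definition vle n (x y : vec n) : Prop := forall i, x i <= y i.

(* r1 (+) r2 = (y1 + 0 v (y2 - y1'), y2' + 0 v (y1' - y2));
   truncated nat subtraction is exactly 0 v (a - b) *)
Definition oplus n (r1 r2 : reaction n) : reaction n :=
  ([ffun i => r1.1 i + (r2.1 i - r1.2 i)], [ffun i => r2.2 i + (r1.2 i - r2.1 i)]).

Definition rzero n : reaction n := ([ffun => 0], [ffun => 0]).

Definition cl n (A : reaction n -> Prop) (r : reaction n) : Prop :=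
  exists s : seq (reaction n),
    (forall j, j < size s -> A (nth (rzero n) s j)) /\
    r = foldr (@oplus n) (rzero n) s.

Definition delta n (r : reaction n) (i : 'I_n) : int :=
  (Posz (r.2 i) - Posz (r.1 i))%R.

Definition sim n (r1 r2 : reaction n) : Prop := forall i, delta r1 i = delta r2 i.

Definition active n (x : vec n) (s : seq (reaction n)) : Prop :=
  forall k, k < size s -> forall i,
    (Posz ((nth (rzero n) s k).1 i) <= Posz (x i) + \sum_(j < k) delta (nth (rzero n) s j) i)%R.

Definition leads_to n (R : reaction n -> Prop) (x x' : vec n) : Prop :=
  exists s : seq (reaction n),
    (forall j, j < size s -> R (nth (rzero n) s j)) /\
    active x s /\
    forall i, Posz (x' i) = (Posz (x i) + \sum_(j < size s) delta (nth (rzero n) s j) i)%R.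

Definition reaction_network n (R : reaction n -> Prop) : Prop :=
  forall r, R r -> r.1 <> r.2.

From mathcomp Require Import all_boot all_order all_algebra.
From mathcomp Require Import zify.
Import GRing.Theory Num.Theory.
Set Implicit Arguments.

(* Write [csum s] for the (+)-sum of a finite sequence s of
   reactions.  Two facts about the sum make it a faithful summary of s:
   (1) reaction vectors are additive, delta (r (+) r') = delta r + delta r',
       so the reaction vector of [csum s] is the sum of those of s;
   (2) the sequence s is active on a state x iff x >= (csum s).1, i.e. the
       reactant of the sum is exactly the minimal state on which s can fire.
   Fact (2) is proved by induction on s, for integer-valued states, using
   the pointwise identity a + 0 v (c - b) <= x <-> a <= x /\ c <= x + b - a.
   Since cl(R) consists precisely of the sums [csum s] of sequences over R,
   (1) and (2) give the first equivalence of the theorem.  The second one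
   follows pointwise: when y <= x, the equation x' = x + y' - y is the same
   as (x, x') ~ (y, y'), and it forces y' <= x'. *)

Definition csum n (s : seq (reaction n)) : reaction n :=
  foldr (@oplus n) (rzero n) s.

(* Activity of a sequence on an integer-valued state: the generalisation of
   [active] needed to state the induction hypothesis on intermediate states. *)
Definition active_int n (x : 'I_n -> int) (s : seq (reaction n)) : Prop :=
  forall k, k < size s -> forall i,
    (Posz ((nth (rzero n) s k).1 i) <= x i + \sum_(j < k) delta (nth (rzero n) s j) i)%R.

Lemma delta_oplus n (r r' : reaction n) i :
  delta (oplus r r') i = (delta r i + delta r' i)%R.
Proof. by rewrite /delta /oplus /= !ffunE; lia. Qed.

Lemma delta_csum n (s : seq (reaction n)) i :
  (\sum_(j < size s) delta (nth (rzero n) s j) i)%R = delta (csum s) i.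
Proof.
elim: s => [|r t IH]; first by rewrite big_ord0 /delta /= !ffunE.
by rewrite big_ord_recl /= IH delta_oplus.
Qed.

Lemma active_int_cons n (x : 'I_n -> int) (r : reaction n) (t : seq (reaction n)) :
  active_int x (r :: t) <->
  (forall i, (Posz (r.1 i) <= x i)%R) /\ active_int (fun i => x i + delta r i)%R t.
Proof.
split.
- move=> act; split=> [i | k lt_kt i].
    by have := act 0 erefl i; rewrite big_ord0 addr0.
  by have := act k.+1 lt_kt i; rewrite big_ord_recl /= addrA.
- case=> fire_r act_t [_ i | k lt_kt i] /=; first by rewrite big_ord0 addr0.
  by rewrite big_ord_recl /= addrA; apply: act_t.
Qed.

Lemma oplus_fst_le n (x : 'I_n -> int) (r r' : reaction n) i :
  (Posz ((oplus r r').1 i) <= x i)%R <->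
  (Posz (r.1 i) <= x i)%R /\ (Posz (r'.1 i) <= x i + delta r i)%R.
Proof. by rewrite /oplus /delta /= !ffunE; split; lia. Qed.

Lemma active_int_csum n (s : seq (reaction n)) (x : 'I_n -> int) :
  (forall i, (0 <= x i)%R) ->
  active_int x s <-> forall i, (Posz ((csum s).1 i) <= x i)%R.
Proof.
elim: s x => [|r t IH] x x_ge0.
  by split=> [_ i | _ k //]; rewrite /= ffunE.
have step_ge0 : (forall i, (Posz (r.1 i) <= x i)%R) ->
                forall i, (0 <= x i + delta r i)%R.
  by move=> fire_r i; have := fire_r i; rewrite /delta; lia.
rewrite active_int_cons; split.
- case=> fire_r /(IH _ (step_ge0 fire_r)) fire_t i.
  by apply/oplus_fst_le; split; [apply: fire_r | apply: fire_t].
- move=> fire_sum.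
  have fire_r i : (Posz (r.1 i) <= x i)%R by case: (oplus_fst_le x r (csum t) i).1.
  split=> //; apply/(IH _ (step_ge0 fire_r)) => i.
  by case: (oplus_fst_le x r (csum t) i).1.
Qed.

Lemma leads_to_cl n (R : reaction n -> Prop) (x x' : vec n) :
  leads_to R x x' <->
  exists r : reaction n, cl R r /\ vle r.1 x /\
    forall i, Posz (x' i) = (Posz (x i) + Posz (r.2 i) - Posz (r.1 i))%R.
Proof.
have active_iff (s : seq (reaction n)) :=
  @active_int_csum n s (fun i => Posz (x i)) (fun i => le0z_nat (x i)).
have shift (s : seq (reaction n)) i :
  (Posz (x i) + \sum_(j < size s) delta (nth (rzero n) s j) i)%R =
  (Posz (x i) + Posz ((csum s).2 i) - Posz ((csum s).1 i))%R.
  by rewrite delta_csum /delta addrA.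
split.
- case=> s [in_R [act reach]]; exists (csum s); split; first by exists s.
  split=> [i | i]; last by rewrite reach shift.
  by have := (active_iff s).1 act i.
- case=> _ [[s [in_R ->]] [fire reach]]; exists s; split=> //; split.
    by apply/active_iff => i; rewrite lez_nat; apply: fire.
  by move=> i; rewrite reach shift.
Qed.

Lemma shift_iff_sim {n} {x x' : vec n} {r : reaction n} :
  vle r.1 x ->
  (forall i, Posz (x' i) = (Posz (x i) + Posz (r.2 i) - Posz (r.1 i))%R) <->
  vle r.2 x' /\ sim (x, x') r.
Proof.
move=> fire; split.
- move=> reach; split=> i; have := reach i; last by rewrite /delta /=; lia.
  by have := fire i; lia.
- by case=> _ same i; have := same i; rewrite /delta /=; lia.
Qed.

Theorem lemma3p3 (n : nat) (R : reaction n -> Prop) (x x' : vec n) :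
  reaction_network R ->
  (leads_to R x x' <->
     exists r : reaction n, cl R r /\ vle r.1 x /\
       forall i, Posz (x' i) = (Posz (x i) + Posz (r.2 i) - Posz (r.1 i))%R) /\
  (leads_to R x x' <->
     exists r : reaction n, cl R r /\ vle r.1 x /\ vle r.2 x' /\ sim (x, x') r).
Proof.
move=> _; split; first exact: leads_to_cl.
rewrite leads_to_cl; split.
- by case=> r [in_cl [fire reach]]; exists r; rewrite -shift_iff_sim.
- case=> r [in_cl [fire post]]; exists r; split=> //; split=> //.
  exact/(shift_iff_sim fire).
Qed.
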